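(* Let $A$ be an $n\times m$ binary matrix with $R_{binary}(A)=n$. Then $A$ has the Augmentation property for the binary rank.
   Context: $R_{binary}(A)$ is the least $k$ such that $A=UV$ with $U\in\{0,1\}^{n\times k}$, $V\in\{0,1\}^{k\times m}$, ordinary arithmetic. $A$ has the Augmentation property for the binary rank if for every collection of binary column vectors $x_1,\dots,x_t$ of length $n$ with $R_{binary}(A|x_i)=R_{binary}(A)$ for all $i$, also $R_{binary}(A|x_1,\dots,x_t)=R_{binary}(A)$, where $(A|x_1,\dots,x_t)$ is $A$ with these columns appended. *)

From mathcomp Require Import all_boot all_order all_algebra.
Set Implicit Arguments. Unset Strict Implicit. Unset Printing Implicit Defensive.
Local Open Scope ring_scope.

(* Binary matrices: matrices of natural numbers with all entries in {0,1};
   products are ordinary (nat) matrix products, no modular arithmetic. *)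
Definition binary_mx (p q : nat) (M : 'M[nat]_(p, q)) : Prop :=
  forall i j, (M i j <= 1)%N.

Definition binary_factorizable (n m k : nat) (A : 'M[nat]_(n, m)) : Prop :=
  exists (U : 'M[nat]_(n, k)) (V : 'M[nat]_(k, m)),
    binary_mx U /\ binary_mx V /\ A = U *m V.

Definition binary_rank_is (n m : nat) (A : 'M[nat]_(n, m)) (r : nat) : Prop :=
  binary_factorizable r A /\ forall k, binary_factorizable k A -> (r <= k)%N.

(* (A | x_1, ..., x_t) : the columns x_i are the columns of X : 'M_(n, t),
   appended to A via row_mx. The i-th appended column alone is col i X. *)
Definition augmentation_property (n m : nat) (A : 'M[nat]_(n, m)) : Prop :=
  forall (r t : nat) (X : 'M[nat]_(n, t)),
    binary_rank_is A r ->
    binary_mx X ->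
    (forall i : 'I_t, binary_rank_is (row_mx A (col i X)) r) ->
    binary_rank_is (row_mx A X) r.

(* A binary n x p matrix M factors as 1 * M, so its binary rank is at most n;
   a factorization U (V1 | V2) of (A | X) restricts to the factorization U V1
   of A, so the binary rank of (A | X) is at least that of A.  Hence if A has
   full binary rank n. *)

From mathcomp Require Import all_boot all_order all_algebra.

Set Implicit Arguments.
Unset Strict Implicit.
Unset Printing Implicit Defensive.

Lemma binary_mx1 n : binary_mx (1%:M%R : 'M[nat]_n).
Proof. by move=> i j; rewrite mxE; case: (i == j). Qed.

Lemma binary_row_mx p q1 q2 (A : 'M[nat]_(p, q1)) (X : 'M[nat]_(p, q2)) :
  binary_mx A -> binary_mx X -> binary_mx (row_mx A X).
Proof.
move=> binA binX i j; rewrite -[j]splitK.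
by case: (split j) => k /=; rewrite ?row_mxEl ?row_mxEr.
Qed.

Lemma binary_lsubmx p q1 q2 (V : 'M[nat]_(p, q1 + q2)) :
  binary_mx V -> binary_mx (lsubmx V).
Proof. by move=> binV i j; rewrite mxE. Qed.

Lemma binary_factorizable_rows n p (M : 'M[nat]_(n, p)) :
  binary_mx M -> binary_factorizable n M.
Proof.
by move=> binM; exists 1%:M%R, M; rewrite mul1mx; split; [exact: binary_mx1|].
Qed.

Lemma binary_factorizable_row_mxl k n q1 q2
    (A : 'M[nat]_(n, q1)) (X : 'M[nat]_(n, q2)) :
  binary_factorizable k (row_mx A X) -> binary_factorizable k A.
Proof.
move=> [U [V [binU [binV AXE]]]]; exists U, (lsubmx V).
by rewrite mulmx_lsub -AXE row_mxKl; split; [|split; [exact: binary_lsubmx|]].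
Qed.

Lemma binary_rank_is_unique n p (M : 'M[nat]_(n, p)) r s :
  binary_rank_is M r -> binary_rank_is M s -> r = s.
Proof.
move=> [fr minr] [fs mins].
by apply/eqP; rewrite eqn_leq (minr s fs) (mins r fr).
Qed.

Lemma binary_rank_row_mx_full n q1 q2
    (A : 'M[nat]_(n, q1)) (X : 'M[nat]_(n, q2)) :
  binary_mx A -> binary_mx X -> binary_rank_is A n ->
  binary_rank_is (row_mx A X) n.
Proof.
move=> binA binX [_ minA]; split.
  exact/binary_factorizable_rows/binary_row_mx.
by move=> k /binary_factorizable_row_mxl /minA.
Qed.

Theorem mainTheorem10 (n m : nat) (A : 'M[nat]_(n, m)) :
  binary_mx A -> binary_rank_is A n -> augmentation_property A.
Proof.
move=> binA rkA r t X rkAr binX _.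
rewrite (binary_rank_is_unique rkAr rkA).
exact: binary_rank_row_mx_full.
Qed.
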